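(* Let $F$ be a field and $R$ a von Neumann regular ring which is an $F$-algebra. Let $M$ be a right $R$-module with $\dim_F M\le\aleph_0$ and let $I=\mathrm{Ann}_R(M)$. The following are equivalent: (1) $R/I$ is Artinian; (2) $M$ is $\Sigma$-$\aleph_0$-injective; (3) $M$ is $\aleph_0$-injective.
   Context: A right $R$-module $N$ is $\aleph_0$-injective if every $R$-homomorphism from a countably generated right ideal of $R$ into $N$ extends to $R$. $M$ is $\Sigma$-$\aleph_0$-injective if the direct sum $M^{(\Lambda)}$ of $\Lambda$ copies of $M$ is $\aleph_0$-injective for every index set $\Lambda$. $\mathrm{Ann}_R(M)=\{r\in R: Mr=0\}$; $M$ is an $F$-vector space via the algebra structure. *)

From HB Require Import structures.
From mathcomp Require Import all_boot all_order all_algebra.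
From Stdlib Require List.
Set Implicit Arguments.
Unset Strict Implicit.
Unset Printing Implicit Defensive.
Import Order.TTheory GRing.Theory.
Local Open Scope ring_scope.

Definition von_neumann_regular (R : nzRingType) : Prop :=
  forall a : R, exists x : R, a = a * x * a.

Definition right_ideal (R : nzRingType) (J : R -> Prop) : Prop :=
  [/\ J 0,
      (forall a b, J a -> J b -> J (a + b)),
      (forall a, J a -> J (- a)) &
      (forall a r, J a -> J (a * r))].

(* J is a countably generated right ideal: there is a countable family
   gen : nat -> R (repetitions / zeros allowed, so finitely generated
   ideals are included) such that J is exactly the set of finite sums
   sum_i gen_i r_i. *)
Definition cg_right_ideal (R : nzRingType) (J : R -> Prop) : Prop :=
  exists gen : nat -> R, forall x : R,
    J x <-> exists (n : nat) (r : nat -> R), x = \sum_(i < n) gen i * r i.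

Definition two_sided_ideal (R : nzRingType) (I : R -> Prop) : Prop :=
  right_ideal I /\ (forall a r, I a -> I (r * a)).

(* (Right) Artinian-ness of the quotient ring R/I, for a two-sided ideal I,
   expressed through the lattice of right ideals of R/I, which (correspondence
   theorem) is the lattice of right ideals of R containing I:
   every descending chain of right ideals of R/I stabilises. *)
Definition quotient_artinian (R : nzRingType) (I : R -> Prop) : Prop :=
  forall J : nat -> (R -> Prop),
    (forall n, right_ideal (J n)) ->
    (forall n x, I x -> J n x) ->
    (forall n x, J n.+1 x -> J n x) ->
    exists n, forall m, (n <= m)%N -> forall x, J m x <-> J n x.

Definition right_module (R : nzRingType) (M : zmodType) (act : M -> R -> M)
  : Prop :=
  [/\ (forall m n r, act (m + n) r = act m r + act n r),
      (forall m r s, act m (r + s) = act m r + act m s),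
      (forall m r s, act m (r * s) = act (act m r) s) &
      (forall m, act m 1 = m)].

Definition ann (R : nzRingType) (M : zmodType) (act : M -> R -> M) : R -> Prop :=
  fun r => forall m : M, act m r = 0.

(* F-vector space structure on M via the F-algebra structure of R:
   k . m := m (k 1_R). *)
Definition fscale (F : fieldType) (R : algType F) (M : zmodType)
  (act : M -> R -> M) (k : F) (m : M) : M := act m (k%:A).

(* dim_F M <= aleph_0 : M has an F-basis B (linearly independent and
   spanning, w.r.t. fscale) which is countable. *)
Definition countable_dim (F : fieldType) (R : algType F) (M : zmodType)
  (act : M -> R -> M) : Prop :=
  exists B : M -> Prop,
    [/\ (exists e : nat -> M, forall b, B b -> exists n, e n = b),
        (forall (s : seq M) (c : M -> F),
            uniq s -> (forall b, b \in s -> B b) ->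
            \sum_(b <- s) fscale act (c b) b = 0 ->
            forall b, b \in s -> c b = 0) &
        (forall m : M, exists (s : seq M) (c : M -> F),
            (forall b, b \in s -> B b) /\
            m = \sum_(b <- s) fscale act (c b) b)].

(* A right R-module presented by a carrier N, an addition, a right action,
   and a predicate S carving out the actual module inside N (used for
   direct sums, which live inside the full product).  f : R -> N is an
   R-homomorphism from the right ideal J into the module. *)
Definition hom_on (R : nzRingType) (N : Type) (addN : N -> N -> N)
  (actN : N -> R -> N) (S : N -> Prop) (J : R -> Prop) (f : R -> N) : Prop :=
  [/\ (forall a, J a -> S (f a)),
      (forall a b, J a -> J b -> f (a + b) = addN (f a) (f b)) &
      (forall a r, J a -> f (a * r) = actN (f a) r)].

Definition aleph0_injective_gen (R : nzRingType) (N : Type)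
  (addN : N -> N -> N) (actN : N -> R -> N) (S : N -> Prop) : Prop :=
  forall (J : R -> Prop) (f : R -> N),
    cg_right_ideal J -> hom_on addN actN S J f ->
    exists g : R -> N, hom_on addN actN S (fun _ => True) g /\
                       (forall a, J a -> g a = f a).

Definition aleph0_injective (R : nzRingType) (M : zmodType)
  (act : M -> R -> M) : Prop :=
  aleph0_injective_gen (fun x y : M => x + y) act (fun _ => True).

(* The direct sum M^(L) of L copies of M: finitely supported functions
   L -> M, with pointwise addition and action. *)
Definition fin_supp (L : Type) (M : zmodType) (f : L -> M) : Prop :=
  exists s : list L, forall l, f l <> 0 -> List.In l s.

Definition dsum_aleph0_injective (R : nzRingType) (M : zmodType)
  (act : M -> R -> M) (L : Type) : Prop :=
  aleph0_injective_gen (fun x y : L -> M => fun l => x l + y l)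
                       (fun (x : L -> M) (r : R) => fun l => act (x l) r)
                       (@fin_supp L M).

Definition sigma_aleph0_injective (R : nzRingType) (M : zmodType)
  (act : M -> R -> M) : Prop :=
  forall L : Type, dsum_aleph0_injective act L.

From HB Require Import structures.
From mathcomp Require Import all_boot all_order all_algebra.
From mathcomp Require Import zify.
From Stdlib Require Import Classical ClassicalEpsilon.
From Stdlib Require Import FunctionalExtensionality PropExtensionality.
Set Implicit Arguments.
Unset Strict Implicit.
Unset Printing Implicit Defensive.
Import GRing.Theory.
Local Open Scope ring_scope.

Section RightModule.
Variables (R : nzRingType) (M : zmodType) (act : M -> R -> M).
Hypothesis act_mod : right_module act.

Lemma actDl m n r : act (m + n) r = act m r + act n r.
Proof. by case: act_mod. Qed.

Lemma actDr m r s : act m (r + s) = act m r + act m s.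
Proof. by case: act_mod. Qed.

Lemma actM m r s : act m (r * s) = act (act m r) s.
Proof. by case: act_mod. Qed.

Lemma act1 m : act m 1 = m.
Proof. by case: act_mod. Qed.

Lemma act0l r : act 0 r = 0.
Proof. by apply: (addrI (act 0 r)); rewrite -actDl !addr0. Qed.

Lemma act0r m : act m 0 = 0.
Proof. by apply: (addrI (act m 0)); rewrite -actDr !addr0. Qed.

Lemma actNr m r : act m (- r) = - act m r.
Proof. by apply/eqP; rewrite -addr_eq0 -actDr addNr act0r. Qed.

Lemma act_suml (I : Type) (s : seq I) (P : pred I) (G : I -> M) r :
  act (\sum_(i <- s | P i) G i) r = \sum_(i <- s | P i) act (G i) r.
Proof. exact: (big_morph (act^~ r) (fun x y => actDl x y r) (act0l r)). Qed.

Lemma act_sumr (I : Type) (s : seq I) (P : pred I) (G : I -> R) m :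
  act m (\sum_(i <- s | P i) G i) = \sum_(i <- s | P i) act m (G i).
Proof. exact: (big_morph (act m) (actDr m) (act0r m)). Qed.

Lemma ann_two_sided : two_sided_ideal (ann act).
Proof.
split; [split|] => [m|a b Ha Hb m|a Ha m|a r Ha m|a r Ha m].
- exact: act0r.
- by rewrite actDr Ha Hb addr0.
- by rewrite actNr Ha oppr0.
- by rewrite actM Ha act0l.
- by rewrite actM Ha.
Qed.

End RightModule.

Section RightIdeal.
Variables (R : nzRingType) (J : R -> Prop).
Hypothesis J_ideal : right_ideal J.

Lemma right_ideal0 : J 0. Proof. by case: J_ideal. Qed.

Lemma right_idealD a b : J a -> J b -> J (a + b).
Proof. by case: J_ideal => _ H _ _; apply: H. Qed.

Lemma right_idealN a : J a -> J (- a).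
Proof. by case: J_ideal => _ _ H _; apply: H. Qed.

Lemma right_idealB a b : J a -> J b -> J (a - b).
Proof. by move=> Ja Jb; apply: right_idealD => //; apply: right_idealN. Qed.

Lemma right_idealM a r : J a -> J (a * r).
Proof. by case: J_ideal => _ _ _ H; apply: H. Qed.

End RightIdeal.

Lemma descending_le (T : Type) (D : nat -> T -> Prop) :
  (forall n x, D n.+1 x -> D n x) ->
  forall n m x, (n <= m)%N -> D m x -> D n x.
Proof.
move=> Ddesc n m x /subnKC <-; elim: (m - n)%N => [|d IH]; first by rewrite addn0.
by rewrite addnS => /Ddesc.
Qed.

Definition gen_right_ideal (R : nzRingType) (k : nat -> R) (x : R) : Prop :=
  exists (n : nat) (r : nat -> R), x = \sum_(i < n) k i * r i.

Lemma gen_right_ideal_cg (R : nzRingType) (k : nat -> R) :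
  cg_right_ideal (gen_right_ideal k).
Proof. by exists k. Qed.

Lemma gen_right_idealP (R : nzRingType) (k : nat -> R) :
  right_ideal (gen_right_ideal k).
Proof.
have widen n N (r : nat -> R) : (n <= N)%N ->
    \sum_(i < n) k i * r i = \sum_(i < N) k i * (if (i < n)%N then r i else 0).
  move=> le_nN; rewrite (big_ord_widen N (fun i => k i * r i) le_nN) big_mkcond.
  by apply: eq_bigr => i _; case: ifP; rewrite ?mulr0.
split.
- by exists 0%N, (fun _ => 0); rewrite big_ord0.
- move=> a b [n [r ->]] [m [s ->]]; exists (maxn n m).
  exists (fun i => (if (i < n)%N then r i else 0) + (if (i < m)%N then s i else 0)).
  rewrite (widen n (maxn n m)) ?leq_maxl // (widen m (maxn n m)) ?leq_maxr //.
  by rewrite -big_split; apply: eq_bigr => i _; rewrite mulrDr.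
- move=> a [n [r ->]]; exists n, (fun i => - r i).
  by rewrite -sumrN; apply: eq_bigr => i _; rewrite mulrN.
- move=> a s [n [r ->]]; exists n, (fun i => r i * s).
  by rewrite big_distrl; apply: eq_bigr => i _; rewrite mulrA.
Qed.

Lemma right_ideal_cg (R : nzRingType) (J : R -> Prop) :
  cg_right_ideal J -> right_ideal J.
Proof.
case=> k HJ; have -> : J = gen_right_ideal k.
  by apply: functional_extensionality => x; apply: propositional_extensionality.
exact: gen_right_idealP.
Qed.

Section ModuloIdeal.
Variables (R : nzRingType) (I : R -> Prop).
Hypothesis I_ideal : two_sided_ideal I.

Let I_right : right_ideal I := proj1 I_ideal.

Lemma idealMl r a : I a -> I (r * a).
Proof. exact: (proj2 I_ideal). Qed.

Definition eqmod (x y : R) : Prop := I (x - y).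

Lemma eqmod_sym x y : eqmod x y -> eqmod y x.
Proof. by rewrite /eqmod => Hxy; rewrite -opprB; exact: (right_idealN I_right). Qed.

Lemma eqmod_trans y x z : eqmod x y -> eqmod y z -> eqmod x z.
Proof. by move=> Hxy /(right_idealD I_right Hxy); rewrite addrA subrK. Qed.

Lemma eqmodB x y x' y' : eqmod x x' -> eqmod y y' -> eqmod (x - y) (x' - y').
Proof.
rewrite /eqmod => Hx Hy; have -> : x - y - (x' - y') = (x - x') - (y - y').
  by rewrite !opprB addrACA [RHS]addrACA [- x' - y]addrC.
exact: (right_idealB I_right).
Qed.

Lemma eqmodMl r x y : eqmod x y -> eqmod (r * x) (r * y).
Proof. by rewrite /eqmod -mulrBr; apply: idealMl. Qed.

Definition principal_mod (J : R -> Prop) : Prop :=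
  exists2 e, J e & forall a, J a -> eqmod a (e * a).

Definition strict_chain (D : nat -> R -> Prop) : Prop :=
  [/\ forall n, right_ideal (D n), forall n x, I x -> D n x,
      forall n x, D n.+1 x -> D n x & forall n, exists2 x, D n x & ~ D n.+1 x].

Definition idempotents_mod (k : nat -> R) : Prop :=
  [/\ forall n, ~ I (k n), forall a b, a <> b -> I (k a * k b)
    & forall a, eqmod (k a * k a) (k a)].

End ModuloIdeal.

Section PrincipalChains.
Variables (R : nzRingType) (I : R -> Prop).
Hypothesis I_ideal : two_sided_ideal I.

Let I_right : right_ideal I := proj1 I_ideal.
Local Notation eqmod := (eqmod I).

Lemma chain_generators (D : nat -> R -> Prop) :
  strict_chain I D -> (forall n, principal_mod I (D n)) ->
  exists g : nat -> R, [/\ forall n, D n (g n),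
    forall n a, D n a -> eqmod a (g n * a)
    & forall n m, (n <= m)%N -> eqmod (g m * g n) (g m)].
Proof.
case=> Dri _ Ddesc _ Dpr.
have [p Hp] : exists p : nat -> R, forall n,
    D n (p n) /\ forall a, D n a -> eqmod a (p n * a).
  apply: (choice (fun n e => D n e /\ forall a, D n a -> eqmod a (e * a))) => n.
  by case: (Dpr n) => e De He; exists e.
pose g := fix g n := if n is n'.+1 then p n * g n' else p 0.
have Dg n : D n (g n) /\ forall a, D n a -> eqmod a (g n * a).
  elim: n => [|n [Dgn gen]] /=; first exact: Hp.
  have [Dp pgen] := Hp n.+1; split; first exact: right_idealM.
  move=> a Da; rewrite -mulrA; apply: (eqmod_trans I_ideal (pgen a Da)).
  exact/(eqmodMl I_ideal)/gen/Ddesc.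
exists g; split => [n|n|n m /subnKC <-]; [exact: (proj1 (Dg n))|exact: (proj2 (Dg n))|].
elim: (m - n)%N => [|d IH]; last by rewrite addnS /= -mulrA; exact: eqmodMl.
by rewrite addn0; apply: eqmod_sym => //; apply: (proj2 (Dg n)); exact: (proj1 (Dg n)).
Qed.

(* The idempotents are k n = g n - g n.+1, differences of consecutive generators. *)
Lemma idempotents_of_chain (D : nat -> R -> Prop) :
  strict_chain I D -> (forall n, principal_mod I (D n)) ->
  exists k, idempotents_mod I k.
Proof.
move=> Dchain Dpr; have [g [Dg gen ggl]] := chain_generators Dchain Dpr.
case: Dchain => Dri DI Ddesc Dstr.
have ggr n m : (n <= m)%N -> eqmod (g n * g m) (g m).
  by move=> le_nm; apply/(eqmod_sym I_ideal)/gen/(descending_le Ddesc le_nm).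
have expand (x y z w : R) : (x - y) * (z - w) = (x * z - x * w) - (y * z - y * w).
  by rewrite mulrBl !mulrBr.
exists (fun n => g n - g n.+1); split.
- move=> n Ik; have [x Dx] := Dstr n; apply.
  have xgx : eqmod x (g n.+1 * x).
    apply: (eqmod_trans I_ideal (gen n x Dx)).
    by rewrite /eqmod -mulrBl; exact: right_idealM.
  rewrite -[x](subrK (g n.+1 * x)); apply: (right_idealD (Dri _)); first exact: DI.
  exact: right_idealM.
- move=> a b neq_ab; rewrite -[_ * _]subr0 expand.
  have [lt_ab|lt_ba|//] := ltngtP a b.
  + rewrite (_ : 0 = (g b - g b.+1) - (g b - g b.+1)); last by rewrite subrr.
    by do 2!apply: (eqmodB I_ideal); apply: ggr; lia.
  + rewrite (_ : 0 = (g a - g a) - (g a.+1 - g a.+1)); last by rewrite !subrr.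
    by do 2!apply: (eqmodB I_ideal); apply: ggl; lia.
- move=> a; rewrite expand.
  rewrite [X in eqmod _ X](_ : _ = (g a - g a.+1) - (g a.+1 - g a.+1)); last first.
    by rewrite subrr subr0.
  by do 2!apply: (eqmodB I_ideal); [exact: ggl|exact: ggr|exact: ggl|exact: ggl].
Qed.

Lemma strict_chain_of_nonartinian : ~ quotient_artinian I -> exists D, strict_chain I D.
Proof.
move=> nA.
have [J [Jri JI Jdesc Jns]] : exists J : nat -> R -> Prop,
    [/\ forall n, right_ideal (J n), forall n x, I x -> J n x,
      forall n x, J n.+1 x -> J n x &
      ~ exists n, forall m, (n <= m)%N -> forall x, J m x <-> J n x].
  apply: NNPP => H; apply: nA => J Jri JI Jdesc; apply: NNPP => H'; apply: H.
  by exists J; split.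
have [next Hnext] : exists next : nat -> nat, forall n,
    (n <= next n)%N /\ exists2 x, J n x & ~ J (next n) x.
  apply: (choice (fun n m => (n <= m)%N /\ exists2 x, J n x & ~ J m x)) => n.
  apply: NNPP => H; apply: Jns; exists n => m le_nm x.
  split; first exact: descending_le.
  by move=> Jnx; apply: NNPP => Jmx; apply: H; exists m; split => //; exists x.
exists (fun t => J (iter t next 0%N)); split => [t|t x Ix|t x|t].
- exact: Jri.
- exact: JI.
- by rewrite iterS => /(descending_le Jdesc (proj1 (Hnext _))).
- by rewrite iterS; exact: (proj2 (Hnext _)).
Qed.

End PrincipalChains.

Section RegularChains.
Variables (R : nzRingType) (I : R -> Prop).
Hypothesis I_ideal : two_sided_ideal I.
Hypothesis R_regular : von_neumann_regular R.

Let I_right : right_ideal I := proj1 I_ideal.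
Local Notation eqmod := (eqmod I).

Lemma split_idempotent (J : R -> Prop) e :
  right_ideal J -> ~ principal_mod I J -> J e -> e * e = e ->
  exists h, [/\ J h, h * h = h, e * h = 0, h * e = 0 & ~ I h].
Proof.
move=> J_ideal Jnp Je ee.
have [a Ja nIa] : exists2 a, J a & ~ I (a - e * a).
  apply: NNPP => Hc; apply: Jnp; exists e => // a Ja.
  by apply: NNPP => Hn; apply: Hc; exists a.
set b := a - e * a.
have Jb : J b by apply: (right_idealB J_ideal Ja); exact: right_idealM.
have eb : e * b = 0 by rewrite /b mulrBr mulrA ee subrr.
have [y Hy] := R_regular b.
set f := b * y.
have fb : f * b = b by rewrite /f -Hy.
have ef : e * f = 0 by rewrite /f mulrA eb mul0r.
have fef : f * (1 - e) * f = f.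
  by rewrite -mulrA mulrBl mul1r ef subr0 /f mulrA -Hy.
exists (f * (1 - e)); split.
- exact/(right_idealM J_ideal)/(right_idealM J_ideal).
- by rewrite mulrA fef.
- by rewrite mulrA ef mul0r.
- by rewrite -mulrA mulrBl mul1r ee subrr mulr0.
- move=> If; apply: nIa; rewrite -/b -fb -fef.
  exact/(right_idealM I_right)/(right_idealM I_right).
Qed.

Lemma idempotent_tower_of_nonprincipal (J : R -> Prop) :
  right_ideal J -> ~ principal_mod I J ->
  exists E : nat -> R, [/\ forall n, E n * E n = E n,
    forall n, E n * E n.+1 = E n & forall n, ~ I (E n.+1 * (1 - E n))].
Proof.
move=> J_ideal Jnp.
have [h Hh] : exists h : R -> R, forall e, J e -> e * e = e ->
    [/\ J (h e), h e * h e = h e, e * h e = 0, h e * e = 0 & ~ I (h e)].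
  apply: (choice (fun e he => J e -> e * e = e ->
    [/\ J he, he * he = he, e * he = 0, he * e = 0 & ~ I he])) => e.
  have [[Je ee]|Hn] := classic (J e /\ e * e = e).
    by have [h' Hh'] := split_idempotent J_ideal Jnp Je ee; exists h'.
  by exists 0 => Je ee; case: Hn.
pose E := fix E n := if n is n'.+1 then E n' + h (E n') else 0.
have JE n : J (E n) /\ E n * E n = E n.
  elim: n => [|n [Je ee]] /=; first by rewrite mulr0; split => //; exact: right_ideal0.
  have [Jh hh eh he _] := Hh _ Je ee.
  by split; [exact: right_idealD | rewrite mulrDl !mulrDr ee hh eh he addr0 add0r].
exists E; split => n; first exact: (proj2 (JE n)).
- have [Je ee] := JE n; have [_ _ eh _ _] := Hh _ Je ee.
  by rewrite /= mulrDr ee eh addr0.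
- have [Je ee] := JE n; have [_ _ _ he nIh] := Hh _ Je ee.
  by rewrite /= mulrDl !mulrBr !mulr1 ee he subrr subr0 add0r.
Qed.

(* The n-th ideal is {x | E n x \in I}, i.e. (1 - E n) R + I. *)
Lemma principal_chain_of_tower (E : nat -> R) :
  (forall n, E n * E n = E n) -> (forall n, E n * E n.+1 = E n) ->
  (forall n, ~ I (E n.+1 * (1 - E n))) ->
  exists D, strict_chain I D /\ forall n, principal_mod I (D n).
Proof.
move=> ee eE nI.
have E1E n : E n * (1 - E n) = 0 by rewrite mulrBr mulr1 ee subrr.
exists (fun n x => I (E n * x)); split; first split.
- move=> n; split => [|a b Ia Ib|a Ia|a r Ia].
  + by rewrite mulr0; exact: right_ideal0.
  + by rewrite mulrDr; exact: right_idealD.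
  + by rewrite mulrN; exact: right_idealN.
  + by rewrite mulrA; exact: right_idealM.
- by move=> n x Ix; exact: idealMl.
- by move=> n x /(idealMl I_ideal (E n)); rewrite mulrA eE.
- move=> n; exists (1 - E n); last exact: nI.
  by rewrite E1E; exact: right_ideal0.
- move=> n; exists (1 - E n) => [|a Ea]; first by rewrite E1E; exact: right_ideal0.
  by rewrite /eqmod mulrBl mul1r opprB addrCA subrr addr0.
Qed.

Lemma principal_chain_of_nonprincipal (J : R -> Prop) :
  right_ideal J -> ~ principal_mod I J ->
  exists D, strict_chain I D /\ forall n, principal_mod I (D n).
Proof.
move=> J_ideal Jnp.
have [E [ee eE nI]] := idempotent_tower_of_nonprincipal J_ideal Jnp.
exact: principal_chain_of_tower.
Qed.

Lemma artinian_principal (J : R -> Prop) :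
  quotient_artinian I -> right_ideal J -> principal_mod I J.
Proof.
move=> IA J_ideal; apply: NNPP => Jnp.
have [D [[Dri DI Ddesc Dstr] _]] := principal_chain_of_nonprincipal J_ideal Jnp.
have [n Hn] := IA D Dri DI Ddesc; have [x Dx nDx] := Dstr n.
by apply: nDx; apply/(Hn n.+1).
Qed.

Lemma idempotents_of_nonartinian :
  ~ quotient_artinian I -> exists k, idempotents_mod I k.
Proof.
move=> nA; have [D Dchain] := strict_chain_of_nonartinian nA.
have [Dpr|] := classic (forall n, principal_mod I (D n)).
  exact: idempotents_of_chain Dchain Dpr.
have [Dri _ _ _] := Dchain.
case/not_all_ex_not => n /(principal_chain_of_nonprincipal (Dri n)).
by case=> D' [D'chain D'pr]; exact: idempotents_of_chain D'chain D'pr.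
Qed.

End RegularChains.

Section DualFamily.
Variables (R : nzRingType) (M : zmodType) (act : M -> R -> M).
Hypothesis act_mod : right_module act.

Lemma dual_family (k : nat -> R) : idempotents_mod (ann act) k ->
  exists u : nat -> M, (forall i, u i <> 0) /\
    forall i j, act (u i) (k j) = if i == j then u i else 0.
Proof.
case=> knz korth kidem.
have [m Hm] : exists m : nat -> M, forall n, act (m n) (k n) <> 0.
  apply: (choice (fun n x => act x (k n) <> 0)) => n.
  by apply: NNPP => H; apply: (knz n) => x; apply: NNPP => Hx; apply: H; exists x.
exists (fun n => act (m n) (k n)); split => // i j.
rewrite -actM //; case: eqP => [<-|/korth]; last exact.
by rewrite -[k i * k i](subrK (k i)) actDr // (kidem i) add0r.
Qed.

Variables (k : nat -> R) (u : nat -> M).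
Hypothesis u_dual : forall i j, act (u i) (k j) = if i == j then u i else 0.

Definition vanishes_from (n : nat) (x : R) : Prop :=
  forall j, (n <= j)%N -> act (u j) x = 0.

Definition select_sum (S : nat -> bool) (N : nat) (x : R) : M :=
  \sum_(i < N | S i) act (u i) x.

Lemma select_sum_widen S n N x :
  vanishes_from n x -> (n <= N)%N -> select_sum S N x = select_sum S n x.
Proof.
move=> van le_nN; rewrite /select_sum (big_ord_widen_cond N _ (fun i => act (u i) x) le_nN).
by rewrite big_mkcondr; apply: eq_bigr => i _; case: ltnP => // /van ->.
Qed.

Lemma vanishes_fromW n N x : (n <= N)%N -> vanishes_from n x -> vanishes_from N x.
Proof. by move=> le_nN van j le_Nj; apply: van; exact: leq_trans le_Nj. Qed.

Lemma gen_right_ideal_vanishes x : gen_right_ideal k x -> exists n, vanishes_from n x.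
Proof.
case=> n [r ->]; exists n => j le_nj; rewrite act_sumr //; apply: big1 => i _.
rewrite actM // u_dual; case: eqP => [eq_ji|_]; last exact: act0l.
by move: (ltn_ord i); rewrite -eq_ji ltnNge le_nj.
Qed.

(* Any index past which x is killed gives the same value; epsilon picks one. *)
Definition selector (S : nat -> bool) (x : R) : M :=
  select_sum S (epsilon (inhabits 0%N) (vanishes_from^~ x)) x.

Lemma selectorE S N x : vanishes_from N x -> selector S x = select_sum S N x.
Proof.
move=> van; have van0 := epsilon_spec (inhabits 0%N) (vanishes_from^~ x) (ex_intro _ N van).
rewrite /selector -(select_sum_widen S van0 (leq_maxl _ N)).
exact: select_sum_widen (leq_maxr _ _).
Qed.

Lemma selector_hom S :
  hom_on (fun x y : M => x + y) act (fun _ => True) (gen_right_ideal k) (selector S).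
Proof.
split => // [a b Ka Kb|a r Ka].
- have [na vana] := gen_right_ideal_vanishes Ka.
  have [nb vanb] := gen_right_ideal_vanishes Kb.
  have {}vana := vanishes_fromW (leq_maxl na nb) vana.
  have {}vanb := vanishes_fromW (leq_maxr na nb) vanb.
  have vanab : vanishes_from (maxn na nb) (a + b).
    by move=> j le_j; rewrite actDr // vana // vanb // addr0.
  rewrite (selectorE S vanab) (selectorE S vana) (selectorE S vanb) -big_split /=.
  by apply: eq_bigr => i _; rewrite actDr.
- have [n van] := gen_right_ideal_vanishes Ka.
  have vanr : vanishes_from n (a * r) by move=> j le_j; rewrite actM // van // act0l.
  rewrite (selectorE S vanr) (selectorE S van) /select_sum act_suml //.
  by apply: eq_bigr => i _; rewrite actM.
Qed.

Lemma selector_gen S j : selector S (k j) = if S j then u j else 0.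
Proof.
have van : vanishes_from j.+1 (k j).
  by move=> i lt_ji; rewrite u_dual; case: eqP => // eq_ij; rewrite eq_ij ltnn in lt_ji.
rewrite (selectorE S van) /select_sum big_mkcond big_ord_recr /= big1 ?add0r.
  by rewrite u_dual eqxx.
by move=> i _; rewrite u_dual (ltn_eqF (ltn_ord i)); case: (S i).
Qed.

Lemma aleph0_injective_selector S : aleph0_injective act ->
  exists x, forall j, act x (k j) = if S j then u j else 0.
Proof.
move=> inj; have [g [[_ _ g_act] g_ext]] :=
  inj _ _ (gen_right_ideal_cg k) (selector_hom S).
exists (g 1) => j; rewrite -g_act // mul1r g_ext ?selector_gen //.
exists j.+1, (fun i => if i == j then 1 else 0).
rewrite big_ord_recr /= eqxx mulr1 big1 ?add0r // => i _.
by rewrite (ltn_eqF (ltn_ord i)) mulr0.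
Qed.

End DualFamily.

Section CountableDimension.
Variables (F : fieldType) (R : algType F) (M : zmodType) (act : M -> R -> M).
Hypothesis act_mod : right_module act.
Local Notation fscale := (fscale act).

Lemma fscale0 m : fscale 0 m = 0.
Proof. by rewrite /fscale scale0r act0r. Qed.

Lemma fscaler0 c : fscale c 0 = 0.
Proof. by rewrite /fscale act0l. Qed.

Lemma fscale1 m : fscale 1 m = m.
Proof. by rewrite /fscale scale1r act1. Qed.

Lemma fscaleDl c d m : fscale (c + d) m = fscale c m + fscale d m.
Proof. by rewrite /fscale scalerDl actDr. Qed.

Lemma fscaleA c d m : fscale c (fscale d m) = fscale (c * d) m.
Proof. by rewrite /fscale -actM // mulr_algl scalerA mulrC. Qed.

Lemma act_fscale c m r : act (fscale c m) r = fscale c (act m r).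
Proof. by rewrite /fscale -!actM // mulr_algl mulr_algr. Qed.

Lemma fscale_sumr (I : Type) (s : seq I) (P : pred I) (G : I -> M) c :
  fscale c (\sum_(i <- s | P i) G i) = \sum_(i <- s | P i) fscale c (G i).
Proof. exact: act_suml. Qed.

Lemma fscale_suml (I : Type) (s : seq I) (P : pred I) (c : I -> F) m :
  fscale (\sum_(i <- s | P i) c i) m = \sum_(i <- s | P i) fscale (c i) m.
Proof. exact: (big_morph (fscale^~ m) (fun x y => fscaleDl x y m) (fscale0 m)). Qed.

Lemma fscale_eq0 c m : c != 0 -> fscale c m = 0 -> m = 0.
Proof. by move=> c0 cm0; rewrite -[m]fscale1 -(mulVf c0) -fscaleA cm0 fscaler0. Qed.

Definition span_first (e : nat -> M) (N : nat) (m : M) : Prop :=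
  exists c : nat -> F, m = \sum_(t < N) fscale (c t) (e t).

Lemma span_first_widen e N N' m : (N <= N')%N -> span_first e N m -> span_first e N' m.
Proof.
move=> le_NN' [c ->]; exists (fun t => if (t < N)%N then c t else 0).
rewrite (big_ord_widen N' (fun t => fscale (c t) (e t)) le_NN') big_mkcond.
by apply: eq_bigr => t _; case: ifP; rewrite ?fscale0.
Qed.

Lemma span_firstD e N m n : span_first e N m -> span_first e N n -> span_first e N (m + n).
Proof.
case=> c -> [d ->]; exists (fun t => c t + d t); rewrite -big_split /=.
by apply: eq_bigr => t _; rewrite fscaleDl.
Qed.

Lemma span_firstZ e N a m : span_first e N m -> span_first e N (fscale a m).
Proof.
case=> c ->; exists (fun t => a * c t); rewrite fscale_sumr.
by apply: eq_bigr => t _; rewrite fscaleA.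
Qed.

Lemma span_first_nth e n : span_first e n.+1 (e n).
Proof.
exists (fun t => if t == n then 1 else 0).
rewrite big_ord_recr /= eqxx fscale1 big1 ?add0r // => t _.
by rewrite (ltn_eqF (ltn_ord t)) fscale0.
Qed.

Lemma countable_dim_span :
  countable_dim act -> exists e, forall m, exists N, span_first e N m.
Proof.
case=> B [[e eB] _ B_span]; exists e => m.
have [s [c [sB ->]]] := B_span m.
elim: s sB => [|b s IH] sB.
  by exists 0%N; rewrite big_nil; exists (fun _ => 0); rewrite big_ord0.
have [N HN] := IH (fun x xs => sB x (mem_behead (s := b :: s) xs)).
have [n en] := eB b (sB b (mem_head _ _)).
exists (maxn N n.+1); rewrite big_cons; apply: span_firstD.
  by apply: (span_first_widen (leq_maxr _ _)); rewrite -en; exact/span_firstZ/span_first_nth.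
exact: (span_first_widen (leq_maxl _ _)).
Qed.

(* N + 1 vectors in the span of N vectors: a nonzero row of the kernel of their
   coordinate matrix gives the dependence. *)
Lemma span_first_dependent e N (v : nat -> M) :
  (forall j, (j <= N)%N -> span_first e N (v j)) ->
  exists a : 'I_N.+1 -> F, (exists j, a j != 0) /\ \sum_(j < N.+1) fscale (a j) (v j) = 0.
Proof.
move=> v_span.
have [cc Hcc] : exists cc : nat -> nat -> F, forall j, (j <= N)%N ->
    v j = \sum_(t < N) fscale (cc j t) (e t).
  apply: (choice (fun j (c : nat -> F) => (j <= N)%N -> v j = \sum_(t < N) fscale (c t) (e t))) => j.
  case: (boolP (j <= N)%N) => [/v_span [c Hc]|_]; first by exists c.
  by exists (fun _ => 0).
pose A := \matrix_(j < N.+1, t < N) cc j t.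
have kerA : kermx A != 0.
  apply/eqP => kerA0; have := mxrank_ker A; rewrite kerA0 mxrank0 => /esym /eqP.
  by rewrite subn_eq0 leqNgt ltnS rank_leq_col.
have [i wi] : exists i, row i (kermx A) != 0.
  apply: NNPP => Hn; move/eqP: kerA; apply; apply/row_matrixP => i; rewrite row0.
  by apply/eqP; apply: NNPP => Hi; apply: Hn; exists i; apply/negP.
set w := row i (kermx A).
have wA : w *m A = 0 by rewrite /w -row_mul mulmx_ker row0.
exists (fun j => w 0 j); split.
  apply: NNPP => Hn; move/eqP: wi; apply; apply/rowP => j; rewrite -/w [RHS]mxE.
  by apply: NNPP => H; apply: Hn; exists j; apply/eqP.
transitivity (\sum_(t < N) fscale ((w *m A) 0 t) (e t)); last first.
  by rewrite wA; apply: big1 => t _; rewrite mxE fscale0.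
rewrite (eq_bigr (fun j => \sum_(t < N) fscale (w 0 j * cc j t) (e t))); last first.
  move=> j _; rewrite Hcc ?fscale_sumr; last by rewrite -ltnS.
  by apply: eq_bigr => t _; rewrite fscaleA.
rewrite exchange_big /=; apply: eq_bigr => t _; rewrite mxE fscale_suml.
by apply: eq_bigr => j _; rewrite [A _ _]mxE.
Qed.

Lemma span_first_unit_patterns e N (r : nat -> R) (y : nat -> M) :
  (forall l, y l <> 0) ->
  exists2 j, (j <= N)%N & ~ exists2 x, span_first e N x &
    forall l, (l <= N)%N -> act x (r l) = if l == j then y l else 0.
Proof.
move=> y_neq0; apply: NNPP => all_realized.
have [v Hv] : exists v : nat -> M, forall j, (j <= N)%N -> span_first e N (v j) /\
    forall l, (l <= N)%N -> act (v j) (r l) = if l == j then y l else 0.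
  apply: (choice (fun j x => (j <= N)%N -> span_first e N x /\
    forall l, (l <= N)%N -> act x (r l) = if l == j then y l else 0)) => j.
  case: (boolP (j <= N)%N) => le_jN; last by exists 0.
  apply: NNPP => Hn; apply: all_realized; exists j => // -[x xspan xj].
  by apply: Hn; exists x.
have [a [[j0 aj0] sum0]] := span_first_dependent (fun j le_jN => proj1 (Hv j le_jN)).
have le_N (j : 'I_N.+1) : (j <= N)%N by rewrite -ltnS ltn_ord.
apply: (y_neq0 j0); apply: (fscale_eq0 aj0).
have := congr1 (act^~ (r j0)) sum0; rewrite /= act0l // act_suml // => <-.
rewrite (bigD1 j0) //= act_fscale (proj2 (Hv _ (le_N j0)) _ (le_N j0)) eqxx.
rewrite big1 ?addr0 // => j neq_j; rewrite act_fscale (proj2 (Hv _ (le_N j)) _ (le_N j0)).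
by case: eqP => [/ord_inj eq_j|_]; [rewrite eq_j eqxx in neq_j | rewrite fscaler0].
Qed.

(* Diagonalize over the blocks {N^2, ..., N^2 + N}: on block N the selector
   takes the pattern that no vector in the span of e_0, ..., e_(N-1) realizes. *)
Lemma countable_dim_unrealizable_selector (k : nat -> R) (u : nat -> M) :
  countable_dim act -> (forall i, u i <> 0) ->
  exists S : nat -> bool, ~ exists x, forall j, act x (k j) = if S j then u j else 0.
Proof.
move=> dimM u_neq0; have [e e_span] := countable_dim_span dimM.
have [jN HjN] : exists jN : nat -> nat, forall N, (jN N <= N)%N /\
    ~ exists2 x, span_first e N x & forall l, (l <= N)%N ->
      act x (k (N * N + l)) = if l == jN N then u (N * N + l) else 0.
  apply: (choice (fun N j => (j <= N)%N /\
    ~ exists2 x, span_first e N x & forall l, (l <= N)%N ->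
      act x (k (N * N + l)) = if l == j then u (N * N + l) else 0)) => N.
  have [j le_jN Hj] := span_first_unit_patterns e N (fun l => k (N * N + l))
    (fun l => u_neq0 (N * N + l)).
  by exists j.
pose S i := [exists N : 'I_i.+1, i == (N * N + jN N)%N].
have S_block N l : (l <= N)%N -> S (N * N + l)%N = (l == jN N).
  move=> le_lN; apply/existsP/eqP => [[N' /eqP eqN']|->].
    have le_N' := proj1 (HjN N'); have eq_NN' : N = N' by nia.
    by move: eqN'; rewrite -eq_NN' => /addnI.
  have lt_N : (N < (N * N + jN N).+1)%N by nia.
  by exists (Ordinal lt_N).
exists S => -[x Hx]; have [N xN] := e_span x.
by apply: (proj2 (HjN N)); exists x => // l le_lN; rewrite Hx S_block.
Qed.

End CountableDimension.

Section Equivalences.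
Variables (R : nzRingType) (M : zmodType) (act : M -> R -> M).
Hypothesis act_mod : right_module act.
Hypothesis R_regular : von_neumann_regular R.

(* An extension is x |-> f (e x): f vanishes on J n Ann(M), since for j = j y j
   there, f j = f j (y j) and y j annihilates every copy of M. *)
Lemma artinian_sigma_aleph0_injective :
  quotient_artinian (ann act) -> sigma_aleph0_injective act.
Proof.
move=> IA L J f cgJ [f_supp f_add f_act].
have J_ideal := right_ideal_cg cgJ.
have ann_ideal := ann_two_sided act_mod.
have [e Je e_gen] := artinian_principal ann_ideal R_regular IA J_ideal.
have eJ a : J (e * a) by exact: right_idealM.
exists (fun x => f (e * x)); split; first split.
- by move=> a _; apply: f_supp.
- by move=> a b _ _; rewrite mulrDr f_add.
- by move=> a r _; rewrite mulrA f_act.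
move=> a Ja; set j := a - e * a.
have Jj : J j by apply: (right_idealB J_ideal Ja).
have [y jyj] := R_regular j.
have fj0 : f j = fun _ => 0.
  rewrite jyj -mulrA f_act ?(right_idealM J_ideal) //.
  apply: functional_extensionality => l /=.
  exact: (idealMl ann_ideal y (e_gen a Ja)).
rewrite -[in RHS](subrK (e * a) a) -/j f_add // fj0.
by apply: functional_extensionality => l; rewrite add0r.
Qed.

Lemma sigma_aleph0_injectiveW :
  sigma_aleph0_injective act -> aleph0_injective act.
Proof.
move=> inj J f cgJ [_ f_add f_act].
have [|g [[_ g_add g_act] g_ext]] := inj unit J (fun a _ => f a) cgJ.
  split => [a _|a b Ja Jb|a r Ja]; last by rewrite f_act.
    by exists [:: tt] => -[] _; left.
  by rewrite f_add.
exists (g^~ tt); split; first split => // [a b _ _|a r _].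
- by rewrite g_add.
- by rewrite g_act.
by move=> a Ja; rewrite g_ext.
Qed.

End Equivalences.

Lemma aleph0_injective_artinian (F : fieldType) (R : algType F) (M : zmodType)
    (act : M -> R -> M) :
  right_module act -> von_neumann_regular R -> countable_dim act ->
  aleph0_injective act -> quotient_artinian (ann act).
Proof.
move=> act_mod R_regular dimM inj; apply: NNPP => nA.
have [k kidem] := idempotents_of_nonartinian (ann_two_sided act_mod) R_regular nA.
have [u [u_neq0 u_dual]] := dual_family act_mod kidem.
have [S nS] := countable_dim_unrealizable_selector act_mod k dimM u_neq0.
exact: nS (aleph0_injective_selector act_mod u_dual S inj).
Qed.

Theorem theorem3p5 (F : fieldType) (R : algType F)
  (M : zmodType) (act : M -> R -> M) :
  von_neumann_regular R ->
  right_module act ->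
  countable_dim act ->
  ( (quotient_artinian (ann act) <-> sigma_aleph0_injective act) /\
    (sigma_aleph0_injective act <-> aleph0_injective act) ).
Proof.
move=> R_regular act_mod dimM.
have artinian_sigma := artinian_sigma_aleph0_injective act_mod R_regular.
have sigma_aleph0 := @sigma_aleph0_injectiveW R M act.
have aleph0_artinian := aleph0_injective_artinian act_mod R_regular dimM.
split; split.
- exact: artinian_sigma.
- by move=> /sigma_aleph0 /aleph0_artinian.
- exact: sigma_aleph0.
- by move=> /aleph0_artinian /artinian_sigma.
Qed.
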